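(* Let $G=(V,E)$ be a geodetic graph and let $(S,T)$ be a partition of $V$ into two sets such that: (1) $S$ and $T$ are geodetically closed, i.e., for all $u,v\in S$ the shortest path from $u$ to $v$ contains only vertices of $S$, and likewise for $T$; (2) for any two distinct edges $\{u,v\}$ and $\{w,x\}$ of the cut set with $u,w\in S$ and $v,x\in T$, the number $d(u,w)+d(v,x)$ is odd. Then for every integer $k\ge 0$, the graph $G'$ obtained from $G$ by subdividing every edge of the cut set with $k$ new vertices (i.e., replacing each such edge by a path of length $k+1$) is geodetic.
   Context: All graphs are finite, simple and undirected; $d(u,v)$ denotes the distance in $G$. A graph is geodetic if between any two vertices there is at most one shortest path. The cut set of the partition $(S,T)$ is the set of edges of $G$ with one endpoint in $S$ and the other in $T$. *)

From mathcomp Require Import all_boot.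
Set Implicit Arguments. Unset Strict Implicit. Unset Printing Implicit Defensive.

(* A graph is a relation e on a finite vertex type V (simple: symmetric and
   irreflexive, assumed in the theorem).  A walk from u to v is a sequence
   p of successive vertices (u excluded) with path e u p and last u p = v;
   its length is size p. *)
Section Graphs.
Variable V : finType.
Variable e : rel V.

Definition walk (u v : V) (p : seq V) : bool := path e u p && (last u p == v).

Definition shortest (u v : V) (p : seq V) : Prop :=
  walk u v p /\ forall q, walk u v q -> size p <= size q.

Definition geodetic : Prop :=
  forall u v p q, shortest u v p -> shortest u v q -> p = q.

(* d(u,v) = n  (only holds when u and v are connected) *)
Definition is_dist (u v : V) (n : nat) : Prop :=
  exists p, shortest u v p /\ size p = n.

Definition geod_closed (A : {set V}) : Prop :=
  forall u v p, u \in A -> v \in A -> shortest u v p -> all (mem A) (u :: p).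

Definition cut_edge (S : {set V}) (x y : V) : bool :=
  [&& x \in S, y \notin S & e x y].

Definition subdiv_vert (S : {set V}) (k : nat) :=
  {t : V * V * 'I_k | cut_edge S t.1.1 t.1.2}.

(* The cut edge {x,y} is replaced by the path x - (x,y,0) - ... - (x,y,k-1) - y.
   For k = 0 there are no new vertices and the cut edges are kept. *)
Definition subdiv_rel (S : {set V}) (k : nat) : rel (V + subdiv_vert S k) :=
  fun a b =>
    match a, b with
    | inl x, inl y => e x y && (((x \in S) == (y \in S)) || (k == 0))
    | inl z, inr t =>
        let: (x, y, i) := val t in
        ((z == x) && (val i == 0)) || ((z == y) && (val i == k.-1))
    | inr t, inl z =>
        let: (x, y, i) := val t in
        ((z == x) && (val i == 0)) || ((z == y) && (val i == k.-1))
    | inr t1, inr t2 =>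
        let: (x1, y1, i1) := val t1 in
        let: (x2, y2, i2) := val t2 in
        [&& x1 == x2, y1 == y2 & ((val i1).+1 == val i2) || ((val i2).+1 == val i1)]
    end.

End Graphs.
Arguments subdiv_rel {V} e S k.

From mathcomp Require Import all_boot zify.
Set Implicit Arguments. Unset Strict Implicit. Unset Printing Implicit Defensive.

(* Write d and d' for the distances of G and of the subdivided graph G'.
   Since S and its complement are geodetically closed, a shortest path of G
   crosses the cut at most once, so d'(a, v) = d(a, v) + k when the old
   vertices a and v lie on different sides and d'(a, v) = d(a, v) otherwise.
   A new vertex on the subdivided edge xy is reached from outside that edge
   through x or through y, so its distance is the shorter of the two routes.

   G' is geodetic as soon as, for every pair a, b taken in one of its two
   orders, b has a single neighbour on the shortest paths from a.  For old a
   and b this neighbour lies on the subdivided edge from b to its unique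
   predecessor in G.  A new vertex b has two neighbours, and both are closer
   to a only if the routes of lengths A and B from a to the ends x and y of
   its edge satisfy |A - B| < k and A - B = k + 1 (mod 2).  For an old a the
   end on the side of a is not farther from a than the other end, whence
   |A - B| >= k.  For a new a on the same edge, d' is the distance along the
   edge.  For a new a on another cut edge uv, A - B = k + 1 + d(u, x) + d(v, y)
   (mod 2), and hypothesis (2) makes d(u, x) + d(v, y) odd. *)

(** * Walks, distances and geodetic graphs *)

Section Walks.
Variables (T : finType) (r : rel T).

Lemma walk_nil u : walk r u u [::].
Proof. by rewrite /walk /= eqxx. Qed.

Lemma walk1 u v : r u v -> walk r u v [:: v].
Proof. by move=> ruv; rewrite /walk /= ruv eqxx. Qed.

Lemma walk_cat u v w p q : walk r u v p -> walk r v w q -> walk r u w (p ++ q).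
Proof.
by case/andP=> Pp /eqP Lp /andP[Pq Lq]; rewrite /walk cat_path last_cat Lp Pp Pq.
Qed.

Lemma walk_rcons u v w p : walk r u v p -> r v w -> walk r u w (rcons p w).
Proof. by move=> Wp rvw; rewrite -cats1; apply: walk_cat Wp (walk1 rvw). Qed.

Lemma walk_cons u v w p : r u v -> walk r v w p -> walk r u w (v :: p).
Proof. by move=> ruv; apply: walk_cat (walk1 ruv). Qed.

Lemma walk_cat_inv u w p q :
  walk r u w (p ++ q) -> walk r u (last u p) p /\ walk r (last u p) w q.
Proof. by rewrite /walk cat_path last_cat eqxx => /andP[/andP[-> ->] ->]. Qed.

Lemma walk_rcons_inv u w p c :
  walk r u w (rcons p c) -> c = w /\ walk r u (last u p) p /\ r (last u p) w.
Proof.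
rewrite /walk rcons_path last_rcons eqxx => /andP[/andP[-> rpc] /eqP cw].
by rewrite -cw.
Qed.

Lemma walk_shortest u v p : walk r u v p -> exists q, shortest r u v q.
Proof.
move=> Wp; have ex_n : exists n, [exists q : n.-tuple T, walk r u v q].
  by exists (size p); apply/existsP; exists (in_tuple p).
case: (ex_minnP ex_n) => n /existsP[q Wq] min_n; exists q; split=> // q' Wq'.
by rewrite size_tuple; apply/min_n/existsP; exists (in_tuple q').
Qed.

Lemma shortest_size u v p q : shortest r u v p -> shortest r u v q -> size p = size q.
Proof. by case=> Wp Mp [Wq Mq]; apply/eqP; rewrite eqn_leq Mp // Mq. Qed.

Lemma shortest_prefix u v p q : shortest r u v (p ++ q) -> shortest r u (last u p) p.
Proof.
case=> /walk_cat_inv[Wp Wq] M; split=> // p' Wp'.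
by have := M _ (walk_cat Wp' Wq); rewrite !size_cat leq_add2r.
Qed.

Lemma shortest_suffix u v p q : shortest r u v (p ++ q) -> shortest r (last u p) v q.
Proof.
case=> /walk_cat_inv[Wp Wq] M; split=> // q' Wq'.
by have := M _ (walk_cat Wp Wq'); rewrite !size_cat leq_add2l.
Qed.

Lemma shortest_is_dist u v p : shortest r u v p -> is_dist r u v (size p).
Proof. by exists p. Qed.

Lemma is_dist_walk u v n : is_dist r u v n -> exists2 p, walk r u v p & size p = n.
Proof. by case=> p [[Wp _] <-]; exists p. Qed.

Lemma is_dist_min u v n q : is_dist r u v n -> walk r u v q -> n <= size q.
Proof. by case=> p [[_ M] <-]; apply: M. Qed.

Lemma is_dist_shortest u v n p : is_dist r u v n -> walk r u v p -> size p = n -> shortest r u v p.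
Proof. by move=> Duv Wp Sp; split=> // q /(is_dist_min Duv); rewrite Sp. Qed.

Lemma is_dist_size u v n p : is_dist r u v n -> shortest r u v p -> size p = n.
Proof.
move=> Duv Sp; have [q Wq Sq] := is_dist_walk Duv.
by rewrite -Sq; apply: shortest_size Sp (is_dist_shortest Duv Wq Sq).
Qed.

Lemma is_dist_uniq u v n m : is_dist r u v n -> is_dist r u v m -> n = m.
Proof. by move=> Dn [p [Sp <-]]; rewrite (is_dist_size Dn Sp). Qed.

Lemma walk_is_dist u v p : walk r u v p -> exists n, is_dist r u v n.
Proof. by case/walk_shortest=> q Sq; exists (size q); apply: shortest_is_dist. Qed.

Lemma is_dist_edge a x y dx dy :
  is_dist r a x dx -> is_dist r a y dy -> r x y -> dy <= dx.+1.
Proof.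
move=> /is_dist_walk[p Wp <-] Dy rxy.
by have := is_dist_min Dy (walk_rcons Wp rxy); rewrite size_rcons.
Qed.

Lemma walk_invariant (P : T -> nat -> Prop) u v q : P u 0 ->
  (forall b c n, P b n -> r b c -> P c n.+1) -> walk r u v q -> P v (size q).
Proof.
move=> P0 step /andP[Pq /eqP <-].
suff gen b n : P b n -> path r b q -> P (last b q) (n + size q).
  by move: (gen u 0 P0 Pq); rewrite add0n.
elim: q b n {Pq} => [|c q IH] b n Pb /=; first by rewrite addn0.
by case/andP=> rbc Pq; rewrite addnS -addSn; apply: IH Pq; apply: step Pb rbc.
Qed.

Definition unique_pred (a b : T) : Prop := forall n c1 c2,
  is_dist r a b n.+1 -> is_dist r a c1 n -> is_dist r a c2 n -> r c1 b -> r c2 b -> c1 = c2.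

Lemma unique_pred_of_two_nbrs a b c1 c2 : (forall c, r c b -> c = c1 \/ c = c2) ->
  (forall n, is_dist r a b n.+1 -> is_dist r a c1 n -> is_dist r a c2 n -> False) ->
  unique_pred a b.
Proof.
move=> nbr no_tie n c c' Db Dc Dc' /nbr[] Ec /nbr[] Ec'; subst c c' => //.
- by case: (no_tie n Db Dc Dc').
- by case: (no_tie n Db Dc' Dc).
Qed.

Definition unique_shortest (a b : T) : Prop :=
  forall p q, shortest r a b p -> shortest r a b q -> p = q.

Lemma unique_shortest_pred n a b : unique_pred a b -> is_dist r a b n.+1 ->
  (forall c, is_dist r a c n -> unique_shortest a c) -> unique_shortest a b.
Proof.
move=> Ub Db IH p q Sp Sq.
case/lastP: p Sp (is_dist_size Db Sp) => [//|p c] Sp; rewrite size_rcons => -[Sp_n].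
case/lastP: q Sq (is_dist_size Db Sq) => [//|q c'] Sq; rewrite size_rcons => -[Sq_n].
have [-> [_ rp]] := walk_rcons_inv Sp.1; have [-> [_ rq]] := walk_rcons_inv Sq.1.
move: Sp Sq; rewrite -!cats1 => /shortest_prefix Sp /shortest_prefix Sq.
have Dp := shortest_is_dist Sp; have Dq := shortest_is_dist Sq.
rewrite Sp_n in Dp; rewrite Sq_n in Dq.
move: Sp; rewrite (Ub _ _ _ Db Dp Dq rp rq) => Sp.
by rewrite (IH _ Dq p q).
Qed.

Section Symmetric.
Hypothesis r_sym : symmetric r.

Lemma walk_rev u v p : walk r u v p -> walk r v u (rev (belast u p)).
Proof.
case/andP=> Pp /eqP <-; rewrite /walk rev_path (@eq_path _ _ r) => [|x y]; last first.
  by rewrite /= r_sym.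
by rewrite Pp; case: p {Pp} => [|z p] /=; rewrite ?rev_cons ?last_rcons eqxx.
Qed.

Lemma shortest_rev u v p : shortest r u v p -> shortest r v u (rev (belast u p)).
Proof.
case=> Wp Mp; split; first exact: walk_rev.
by move=> q /walk_rev/Mp; rewrite !size_rev !size_belast.
Qed.

Lemma is_dist_sym u v n : is_dist r u v n -> is_dist r v u n.
Proof.
case=> p [Sp <-]; exists (rev (belast u p)).
by rewrite size_rev size_belast; split=> //; apply: shortest_rev.
Qed.

Lemma edge_ends_walk x y u v : r x y -> u \in [:: x; y] -> v \in [:: x; y] ->
  exists p, walk r u v p.
Proof.
move=> rxy; have ryx : r y x by rewrite r_sym.
rewrite !inE => /pred2P[]-> /pred2P[]->.
- by exists [::]; apply: walk_nil.
- by exists [:: y]; apply: walk1.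
- by exists [:: x]; apply: walk1.
- by exists [::]; apply: walk_nil.
Qed.

Lemma edge_is_dist a x y u p : r x y -> u \in [:: x; y] -> walk r a u p ->
  exists dx dy, is_dist r a x dx /\ is_dist r a y dy.
Proof.
move=> rxy u_xy Wp; have end_dist v : v \in [:: x; y] -> exists d, is_dist r a v d.
  by case/(edge_ends_walk rxy u_xy) => q /(walk_cat Wp)/walk_is_dist.
have [dx Dx] := end_dist x (mem_head _ _); have [dy Dy] := end_dist y (mem_last x [:: y]).
by exists dx, dy.
Qed.

Lemma edges_is_dist x y w z u v p : r x y -> r w z ->
  u \in [:: x; y] -> v \in [:: w; z] -> walk r u v p ->
  exists dxw dxz dyw dyz,
    [/\ is_dist r x w dxw, is_dist r x z dxz, is_dist r y w dyw & is_dist r y z dyz].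
Proof.
move=> rxy rwz u_xy v_wz Wp.
have dist a b : a \in [:: x; y] -> b \in [:: w; z] -> exists d, is_dist r a b d.
  move=> a_xy b_wz; have [q1 W1] := edge_ends_walk rxy a_xy u_xy.
  have [q2 W2] := edge_ends_walk rwz v_wz b_wz.
  exact: walk_is_dist (walk_cat W1 (walk_cat Wp W2)).
have x_xy := mem_head x [:: y]; have y_xy := mem_last x [:: y].
have w_wz := mem_head w [:: z]; have z_wz := mem_last w [:: z].
have [dxw ?] := dist _ _ x_xy w_wz; have [dxz ?] := dist _ _ x_xy z_wz.
have [dyw ?] := dist _ _ y_xy w_wz; have [dyz ?] := dist _ _ y_xy z_wz.
by exists dxw, dxz, dyw, dyz.
Qed.

Lemma unique_shortest_sym a b : unique_shortest a b -> unique_shortest b a.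
Proof.
move=> U p q Sp Sq; have := U _ _ (shortest_rev Sp) (shortest_rev Sq).
case: Sp Sq => [/andP[_ /eqP Lp] _] [/andP[_ /eqP Lq] _].
move/(congr1 rev); rewrite !revK => E.
by have [] : b :: p = b :: q by rewrite !(lastI b) E Lp Lq.
Qed.

Lemma geodetic_of_unique_pred :
  (forall a b, unique_pred a b \/ unique_pred b a) -> geodetic r.
Proof.
move=> Upred; suff main n a b : is_dist r a b n -> unique_shortest a b.
  by move=> a b p q Sp; apply: main (shortest_is_dist Sp) p q Sp.
elim: n a b => [|n IH] a b Dab.
  by move=> [|??] [|??] /(is_dist_size Dab) + /(is_dist_size Dab).
have IHa c : is_dist r a c n -> unique_shortest a c by apply: IH.
have IHb c : is_dist r b c n -> unique_shortest b c by apply: IH.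
case: (Upred a b) => U; first exact: unique_shortest_pred U Dab IHa.
by apply/unique_shortest_sym/(unique_shortest_pred U (is_dist_sym Dab) IHb).
Qed.

End Symmetric.

Lemma geodetic_unique_pred : geodetic r -> forall a b, unique_pred a b.
Proof.
move=> r_geo a b n c1 c2 Db /is_dist_walk[p1 W1 S1] /is_dist_walk[p2 W2 S2] r1 r2.
have Sb p c : walk r a c p -> size p = n -> r c b -> shortest r a b (rcons p b).
  by move=> Wp Sp rcb; apply: is_dist_shortest Db (walk_rcons Wp rcb) _; rewrite size_rcons Sp.
have /rcons_inj[E] := r_geo _ _ _ _ (Sb _ _ W1 S1 r1) (Sb _ _ W2 S2 r2).
by case/andP: W1 => _ /eqP <-; case/andP: W2 => _ /eqP <-; rewrite E.
Qed.

End Walks.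

(** * The subdivided graph *)

Section Subdivision.
Variables (V : finType) (e : rel V) (S : {set V}) (k : nat).

Local Notation V' := (V + subdiv_vert e S k)%type.
Local Notation e' := (subdiv_rel e S k).

Hypothesis e_sym : symmetric e.

Lemma subdiv_rel_sym : symmetric e'.
Proof.
move=> [x|[[[x1 y1] i1] H1]] [y|[[[x2 y2] i2] H2]] //=.
- by rewrite e_sym eq_sym.
- by rewrite (eq_sym x1) (eq_sym y1) orbC.
Qed.

Section CutEdge.
Variables (x y : V) (H : cut_edge e S x y).

Lemma cut_in : x \in S. Proof. by case/and3P: H. Qed.
Lemma cut_out : y \notin S. Proof. by case/and3P: H. Qed.
Lemma cut_rel : e x y. Proof. by case/and3P: H. Qed.

Lemma cut_side : (x \in S) != (y \in S).
Proof. by rewrite cut_in (negbTE cut_out). Qed.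

Lemma cut_neq : x != y.
Proof. by apply: contraNneq cut_out => <-; apply: cut_in. Qed.

(* The vertex at distance [t] from [x] along the subdivided edge [xy]: [x] for
   [t = 0], a new vertex for [0 < t <= k], and [y] for every [t > k]. *)
Definition subdiv_at (t : nat) : V' :=
  if t is i.+1 then
    if insub i is Some o then inr (exist _ (x, y, o) H) else inl y
  else inl x.

Lemma subdiv_at_inner i (lt_ik : i < k) :
  subdiv_at i.+1 = inr (exist _ (x, y, Ordinal lt_ik) H).
Proof. by rewrite /= insubT. Qed.

Lemma subdiv_at_last : subdiv_at k.+1 = inl y.
Proof. by rewrite /= insubF // ltnn. Qed.

Lemma subdiv_at_ord (o : 'I_k) : inr (exist _ (x, y, o) H) = subdiv_at o.+1.
Proof. by case: o => i lt_ik; rewrite subdiv_at_inner. Qed.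

Definition subdiv_index (b : V') : nat :=
  match b with inl v => if v == x then 0 else k.+1 | inr t => (val t).2.+1 end.

Lemma subdiv_atK t : t <= k.+1 -> subdiv_index (subdiv_at t) = t.
Proof.
case: t => [|i] le_tk /=; first by rewrite eqxx.
case: insubP => [o _ /= -> //|]; rewrite -leqNgt => le_ki.
by rewrite /= eq_sym (negbTE cut_neq); apply/eqP; lia.
Qed.

Lemma subdiv_at_inj s t : s <= k.+1 -> t <= k.+1 -> subdiv_at s = subdiv_at t -> s = t.
Proof. by move=> ls lt E; rewrite -(subdiv_atK ls) -(subdiv_atK lt) E. Qed.

Lemma subdiv_at_edge t : t <= k -> e' (subdiv_at t) (subdiv_at t.+1).
Proof.
case: t => [|i] le_tk.
  case: (posnP k) => [k0|k_gt0]; last by rewrite subdiv_at_inner /= eqxx.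
  by rewrite /= insubF ?k0 //= cut_rel orbT.
rewrite subdiv_at_inner /=; case: insubP => [o _ /= -> |]; first by rewrite !eqxx.
by rewrite -leqNgt /= eqxx => le_ki; apply/orP; right; apply/eqP; lia.
Qed.

Lemma subdiv_at_walk_up s n : s + n <= k.+1 ->
  walk e' (subdiv_at s) (subdiv_at (s + n)) (map subdiv_at (iota s.+1 n)).
Proof.
elim: n s => [|n IH] s le_snk; first by rewrite addn0 walk_nil.
apply: walk_cons; first by apply: subdiv_at_edge; lia.
by rewrite addnS -addSn; apply: IH; lia.
Qed.

Lemma subdiv_at_walk s t : s <= k.+1 -> t <= k.+1 ->
  exists2 q, walk e' (subdiv_at s) (subdiv_at t) q & size q = (t - s) + (s - t).
Proof.
move=> le_sk le_tk; case: (leqP s t) => [le_st|lt_ts].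
  exists (map subdiv_at (iota s.+1 (t - s))); last by rewrite size_map size_iota; lia.
  by have := @subdiv_at_walk_up s (t - s); rewrite subnKC //; apply; lia.
have := @subdiv_at_walk_up t (s - t); rewrite subnKC ?(ltnW lt_ts) // => /(_ le_sk).
move/(walk_rev subdiv_rel_sym) => W.
exists (rev (belast (subdiv_at t) (map subdiv_at (iota t.+1 (s - t))))) => //.
by rewrite size_rev size_belast size_map size_iota; lia.
Qed.

Lemma subdiv_at_nbr i : i < k ->
  forall c, e' c (subdiv_at i.+1) -> c = subdiv_at i \/ c = subdiv_at i.+2.
Proof.
move=> lt_ik c; rewrite (subdiv_at_inner lt_ik).
case: c => [z|[[[x' y'] o] H']]; rewrite [e' _ _]/=.
  case/orP=> /andP[/eqP-> /eqP ik]; first by left; rewrite ik.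
  by right; rewrite (_ : i.+2 = k.+1) ?subdiv_at_last //; lia.
case/and3P=> /eqP Ex /eqP Ey /orP[]/eqP Ei; subst x' y'; [left; rewrite -Ei | right; rewrite Ei];
by rewrite -subdiv_at_ord (bool_irrelevance H' H).
Qed.

End CutEdge.

Lemma subdiv_at_irr x y (H1 H2 : cut_edge e S x y) : subdiv_at H1 =1 subdiv_at H2.
Proof. by rewrite (bool_irrelevance H1 H2). Qed.

Lemma subdiv_at_other x y w z (H : cut_edge e S x y) (H' : cut_edge e S w z) s t :
  (x, y) != (w, z) -> 0 < s <= k -> subdiv_at H' t != subdiv_at H s.
Proof.
move=> nxy; case: s => // i /andP[_ lt_ik]; rewrite subdiv_at_inner.
case: t => [|j] //=; case: insub => [o|] //=; apply/eqP => -[wx zy _].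
by rewrite wx zy eqxx in nxy.
Qed.

(** * Shortest paths from an old vertex *)

(* The length that G' adds to a shortest path of G from [a] to [v], which
   crosses the cut iff [a] and [v] lie on different sides. *)
Definition cross (a v : V) : nat := if (a \in S) == (v \in S) then 0 else k.

Lemma cross_le a v : cross a v <= k.
Proof. by rewrite /cross; case: ifP. Qed.

Lemma crossxx a : cross a a = 0.
Proof. by rewrite /cross eqxx. Qed.

Lemma cross_side a v v' : (v \in S) == (v' \in S) -> cross a v = cross a v'.
Proof. by rewrite /cross => /eqP->. Qed.

Lemma cross0 a v : k = 0 -> cross a v = 0.
Proof. by rewrite /cross => ->; case: ifP. Qed.

(* [shadow a b n]: some walk of G from [a] to [b] (to an end of the cut edge
   carrying [b] if [b] is new) has a length which, plus [cross] and plus the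
   remaining steps along the subdivided edge, is at most [n].  Walks of G'
   from [a] preserve it, so it bounds d' from below. *)
Definition shadow (a : V) (b : V') (n : nat) : Prop :=
  match b with
  | inl v => exists2 p, walk e a v p & size p + cross a v <= n
  | inr t => let: (x, y, i) := val t in
      (exists2 p, walk e a x p & size p + cross a x + i.+1 <= n) \/
      (exists2 p, walk e a y p & size p + cross a y + (k - i) <= n)
  end.

Lemma shadow_self u : shadow u (inl u) 0.
Proof. by exists [::]; rewrite ?walk_nil // crossxx. Qed.

Lemma shadow_step a b c n : shadow a b n -> e' b c -> shadow a c n.+1.
Proof.
case: b => [z|[[[x y] i] H]]; case: c => [z'|[[[x' y'] i'] H']] /=.
- case=> p Wp Sp /andP[ezz' side]; exists (rcons p z'); first exact: walk_rcons Wp ezz'.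
  rewrite size_rcons; case/orP: side => [side|/eqP k0]; last by rewrite !cross0 // in Sp *; lia.
  by rewrite -(cross_side a side); lia.
- have lt_ik := ltn_ord i'; case=> p Wp Sp /orP[] /andP[/eqP ? /eqP Ei]; subst z.
    by left; exists p; rewrite // Ei; lia.
  by right; exists p => //; lia.
- have exy : e x y := cut_rel H; have eyx : e y x by rewrite e_sym.
  have lt_ik := ltn_ord i; have cx := cross_le a x; have cy := cross_le a y.
  case=> [[p Wp Sp]|[p Wp Sp]] /orP[] /andP[/eqP ? /eqP Ei]; subst z'.
  + by exists p => //; lia.
  + by exists (rcons p y); [apply: walk_rcons Wp exy | rewrite size_rcons; lia].
  + by exists (rcons p x); [apply: walk_rcons Wp eyx | rewrite size_rcons; lia].
  + by exists p => //; lia.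
- have lt_ik := ltn_ord i; have lt_i'k := ltn_ord i'.
  case=> [[p Wp Sp]|[p Wp Sp]] /and3P[/eqP ? /eqP ? /orP[]/eqP Ei]; subst x' y';
  [left | left | right | right]; exists p => //; lia.
Qed.

Lemma shadow_walk a b q : walk e' (inl a) b q -> shadow a b (size q).
Proof.
by apply: (walk_invariant (P := shadow a)) (shadow_self a) _ => b' c n; apply: shadow_step.
Qed.

Lemma shadow_subdiv_at a x y (H : cut_edge e S x y) t n : t <= k.+1 ->
  shadow a (subdiv_at H t) n ->
  (exists2 p, walk e a x p & size p + cross a x + t <= n) \/
  (exists2 p, walk e a y p & size p + cross a y + (k.+1 - t) <= n).
Proof.
case: t => [|i] le_tk; first by case=> p Wp Sp; left; exists p; rewrite // addn0.
case: (ltnP i k) => [lt_ik|le_ki]; first by rewrite subdiv_at_inner /= subSS.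
have -> : i = k by lia.
by rewrite subdiv_at_last => -[p Wp Sp]; right; exists p; rewrite // subnn addn0.
Qed.

Definition same_side (u : V) : pred V := fun w => (w \in S) == (u \in S).

Lemma lift_walk u v p : walk e u v p -> all (same_side u) p ->
  walk e' (inl u) (inl v) (map inl p).
Proof.
case/andP=> Pp /eqP <- Ap; rewrite /walk (last_map inl) eqxx andbT.
elim: p u Pp Ap => [|z p IH] u //= /andP[euz Pp] /andP[/eqP zu Ap].
rewrite euz zu eqxx /=; apply: IH => //.
by apply: sub_all Ap => w; rewrite /same_side zu.
Qed.

Lemma crossing_walk x z : e x z -> (x \in S) != (z \in S) ->
  exists2 q, walk e' (inl x) (inl z) q & size q = k.+1.
Proof.
case: (boolP (x \in S)) => xS exz zS.
  have H : cut_edge e S x z by rewrite /cut_edge xS exz andbT; case: (z \in S) zS.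
  have [q] := subdiv_at_walk H (leq0n k.+1) (leqnn k.+1).
  by rewrite subdiv_at_last => Wq Sq; exists q => //; rewrite Sq; lia.
have H : cut_edge e S z x by rewrite /cut_edge xS e_sym exz; case: (z \in S) zS.
have [q] := subdiv_at_walk H (leqnn k.+1) (leq0n k.+1).
by rewrite subdiv_at_last => Wq Sq; exists q => //; rewrite Sq; lia.
Qed.

Hypotheses (closedS : geod_closed e S) (closedT : geod_closed e (~: S)).

Lemma closed_side a v p : shortest e a v p -> (a \in S) == (v \in S) ->
  all (same_side a) (a :: p).
Proof.
move=> Sp; case: (boolP (a \in S)) => aS /eqP vS.
  have vS' : v \in S by rewrite -vS.
  by apply: sub_all (closedS aS vS' Sp) => w /= wS; rewrite /same_side aS wS.
have aT : a \in ~: S by rewrite in_setC.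
have vT : v \in ~: S by rewrite in_setC -vS.
apply: sub_all (closedT aT vT Sp) => w /=.
by rewrite /same_side in_setC (negbTE aS) => /negbTE ->.
Qed.

Lemma subdiv_walk_of_dist a v d : is_dist e a v d ->
  exists2 q, walk e' (inl a) (inl v) q & size q = d + cross a v.
Proof.
case=> p [Sp <-]; rewrite /cross; case: ifP => side.
  exists (map inl p); rewrite ?size_map ?addn0 //.
  by apply: lift_walk; [case: Sp | case/andP: (closed_side Sp side)].
(* [p] changes sides once: from its first vertex [z] on the side of [v], it is
   a shortest path inside that side. *)
have [/andP[_ /eqP vp] _] := Sp.
have p_leaves : has (predC (same_side a)) p.
  apply/hasP; exists v; last by rewrite /= /same_side eq_sym side.
  by move: (mem_last a p); rewrite vp inE => /predU1P[va|//]; rewrite va eqxx in side.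
move: Sp {vp}; case/split_find: p_leaves => z p1 p2 /= za.
rewrite -all_predC => /allP a_p1 Sp.
have Sp2 : shortest e z v p2 by have := shortest_suffix Sp; rewrite last_rcons.
case: Sp => /walk_cat_inv[]; rewrite last_rcons => /walk_rcons_inv[_ [Wp1 ex]] _ _.
have [q Wq Sq] : exists2 q, walk e' (inl (last a p1)) (inl z) q & size q = k.+1.
  apply: crossing_walk ex _; move: (mem_last a p1) za; rewrite inE => /predU1P[->|/a_p1].
    by rewrite /same_side; case: (z \in S); case: (a \in S).
  by rewrite /= negbK /same_side => /eqP ->; case: (z \in S); case: (a \in S).
have zv : (z \in S) == (v \in S).
  by move: za side; rewrite /same_side; case: (z \in S); case: (a \in S); case: (v \in S).
exists (map inl p1 ++ q ++ map inl p2).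
  apply: walk_cat (walk_cat Wq _); apply: lift_walk => //.
  - by apply/allP => w /a_p1; rewrite /= negbK.
  - by case: Sp2.
  - by case/andP: (closed_side Sp2 zv).
by rewrite !size_cat !size_map size_rcons Sq; lia.
Qed.

Lemma subdiv_dist_old_old a v d n :
  is_dist e a v d -> is_dist e' (inl a) (inl v) n -> n = d + cross a v.
Proof.
move=> Dv Dn; have [q Wq Sq] := subdiv_walk_of_dist Dv.
have := is_dist_min Dn Wq; have [q' Wq' Sq'] := is_dist_walk Dn.
have [p Wp Sp] : shadow a (inl v) (size q') := shadow_walk Wq'.
by have := is_dist_min Dv Wp; lia.
Qed.

Lemma subdiv_walk_via a x y (H : cut_edge e S x y) u s t d :
  s <= k.+1 -> t <= k.+1 -> subdiv_at H s = inl u -> is_dist e a u d ->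
  exists2 q, walk e' (inl a) (subdiv_at H t) q & size q = d + cross a u + ((t - s) + (s - t)).
Proof.
move=> le_sk le_tk Hu Du; have [q1 W1 S1] := subdiv_walk_of_dist Du.
have [q2 W2 S2] := subdiv_at_walk H le_sk le_tk; rewrite Hu in W2.
by exists (q1 ++ q2); [apply: walk_cat W1 W2 | rewrite size_cat S1 S2].
Qed.

Lemma subdiv_dist_old_new a x y (H : cut_edge e S x y) t dx dy n : t <= k.+1 ->
  is_dist e a x dx -> is_dist e a y dy -> is_dist e' (inl a) (subdiv_at H t) n ->
  n = minn (dx + cross a x + t) (dy + cross a y + (k.+1 - t)).
Proof.
move=> le_tk Dx Dy Dn.
have [qx Wx Sx] := subdiv_walk_via (leq0n k.+1) le_tk (erefl : subdiv_at H 0 = inl x) Dx.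
have [qy Wy Sy] := subdiv_walk_via (leqnn k.+1) le_tk (subdiv_at_last H) Dy.
have := is_dist_min Dn Wx; have := is_dist_min Dn Wy; rewrite Sx Sy.
have [q /shadow_walk Wq Sq] := is_dist_walk Dn.
by case: (shadow_subdiv_at le_tk Wq) => -[p Wp Sp];
  [have := is_dist_min Dx Wp | have := is_dist_min Dy Wp]; lia.
Qed.

Lemma is_dist_old_new_ends a x y (H : cut_edge e S x y) t n : t <= k.+1 ->
  is_dist e' (inl a) (subdiv_at H t) n -> exists dx dy, is_dist e a x dx /\ is_dist e a y dy.
Proof.
move=> le_tk /is_dist_walk[q /shadow_walk Wq _].
have ends := edge_is_dist e_sym (cut_rel H).
by case: (shadow_subdiv_at le_tk Wq) => -[p Wp _];
  [exact: ends _ _ (mem_head x [:: y]) Wp | exact: ends _ _ (mem_last x [:: y]) Wp].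
Qed.

Lemma is_dist_same_side_le a u w du dw :
  e u w -> (u \in S) != (w \in S) -> (a \in S) == (w \in S) ->
  is_dist e a u du -> is_dist e a w dw -> dw <= du.
Proof.
move=> euw uw aw Du Dw; rewrite leqNgt; apply/negP => lt_du_dw.
have [p Wp Sp] := is_dist_walk Du; have := is_dist_edge Du Dw euw => le_dw_du1.
have Sw : shortest e a w (rcons p w).
  by apply: is_dist_shortest Dw (walk_rcons Wp euw) _; rewrite size_rcons Sp; lia.
have Lu : last a p = u by case/andP: Wp => _ /eqP.
have /allP/(_ u) := closed_side Sw aw.
rewrite -Lu -cats1 -cat_cons mem_cat mem_last Lu => /(_ isT).
by rewrite /same_side /= (eqP aw) (negbTE uw).
Qed.

Lemma no_tie_old_new a x y (H : cut_edge e S x y) i n : i < k ->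
  is_dist e' (inl a) (subdiv_at H i.+1) n.+1 ->
  is_dist e' (inl a) (subdiv_at H i) n -> is_dist e' (inl a) (subdiv_at H i.+2) n -> False.
Proof.
move=> lt_ik D1 D0 D2.
have [le0 le1 le2] : [/\ i <= k.+1, i.+1 <= k.+1 & i.+2 <= k.+1] by split; lia.
have [dx [dy [Dx Dy]]] := is_dist_old_new_ends le1 D1.
have := subdiv_dist_old_new le0 Dx Dy D0; have := subdiv_dist_old_new le1 Dx Dy D1.
have := subdiv_dist_old_new le2 Dx Dy D2.
have exy := cut_rel H; have eyx : e y x by rewrite e_sym.
have := is_dist_edge Dx Dy exy; have := is_dist_edge Dy Dx eyx.
have xS := cut_in H; have /negbTE yS := cut_out H.
have yx : (y \in S) != (x \in S) by rewrite eq_sym cut_side.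
rewrite /cross xS yS; case: (boolP (a \in S)) => aS /=.
  have ax : (a \in S) == (x \in S) by rewrite aS xS.
  by have := is_dist_same_side_le eyx yx ax Dy Dx; lia.
have ay : (a \in S) == (y \in S) by rewrite yS (negbTE aS).
by have := is_dist_same_side_le exy (cut_side H) ay Dx Dy; lia.
Qed.

Lemma unique_pred_old_new a t : unique_pred e' (inl a) (inr t).
Proof.
case: t => [[[x y] o] H]; rewrite subdiv_at_ord.
apply: unique_pred_of_two_nbrs (subdiv_at_nbr (ltn_ord o)) _ => n.
exact: no_tie_old_new (ltn_ord o).
Qed.

Lemma subdiv_nbr_old v c : e' c (inl v) ->
  (exists2 z, c = inl z & e z v /\ ((z \in S) == (v \in S) \/ k = 0)) \/
  (exists y (H : cut_edge e S v y), c = subdiv_at H 1) \/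
  (exists x (H : cut_edge e S x v), c = subdiv_at H k).
Proof.
case: c => [z|[[[x y] o] H]] /=.
  case/andP=> ezv side; left; exists z => //; split=> //.
  by case/orP: side => [side|/eqP k0]; [left | right].
rewrite subdiv_at_ord; case/orP=> /andP[/eqP vx /eqP o0]; subst v; rewrite o0.
  by right; left; exists y, H.
by right; right; exists x, H; rewrite (_ : k.-1.+1 = k) //; have := ltn_ord o; lia.
Qed.

Definition on_edge (v g : V) (c : V') : bool :=
  match c with
  | inl z => z == g
  | inr t => let: (x, y, _) := val t in ((x, y) == (v, g)) || ((x, y) == (g, v))
  end.

Lemma on_edge_subdiv_at x y (H : cut_edge e S x y) t : 0 < t -> on_edge x y (subdiv_at H t).
Proof. by case: t => // i _ /=; case: insub => [o|] /=; rewrite eqxx. Qed.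

Lemma on_edge_subdiv_at_rev x y (H : cut_edge e S x y) t : t <= k -> on_edge y x (subdiv_at H t).
Proof. by case: t => [|i] le_tk; rewrite ?subdiv_at_inner //= eqxx orbT. Qed.

Lemma on_edge_uniq v g c1 c2 : e' c1 (inl v) -> e' c2 (inl v) ->
  on_edge v g c1 -> on_edge v g c2 -> c1 = c2.
Proof.
have new_old t z : e' (inr t) (inl v) -> on_edge v g (inr t) ->
    e' (inl z) (inl v) -> on_edge v g (inl z) -> False.
  case: t => [[[x y] o] H] /= _ on_t /andP[_ side] /eqP zg; subst z.
  have := ltn_ord o; have := cut_side H; case/orP: side => [/eqP side|/eqP k0]; last by lia.
  by case/orP: on_t => /eqP[-> ->]; rewrite side eqxx.
case: c1 => [z1|t1]; case: c2 => [z2|t2].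
- by move=> _ _ /eqP-> /eqP->.
- by move=> e1 e2 o1 o2; case: (new_old t2 z1 e2 o2 e1 o1).
- by move=> e1 e2 o1 o2; case: (new_old t1 z2 e1 o1 e2 o2).
case: t1 t2 => [[[x1 y1] o1] H1] [[[x2 y2] o2] H2] /= adj1 adj2 on1 on2.
have [? ?] : x1 = x2 /\ y1 = y2.
  case/orP: on1 => /eqP[? ?]; case/orP: on2 => /eqP[? ?]; subst=> //.
    by move: (cut_in H1) (cut_out H2) => ->.
  by move: (cut_in H2) (cut_out H1) => ->.
subst x2 y2; have o12 : nat_of_ord o1 = o2.
  have xy1 : x1 != y1 := cut_neq H1.
  case: (eqVneq v x1) => [vx1|_] in adj1 adj2.
    have vy1 : (v == y1) = false by rewrite vx1 (negbTE xy1).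
    by move: adj1 adj2; rewrite vy1 /= !orbF => /eqP-> /eqP->.
  by move: adj1 adj2 => /andP[_ /eqP->] /andP[_ /eqP->].
by rewrite (ord_inj o12) (bool_irrelevance H1 H2).
Qed.

Lemma subdiv_pred_old a v c n :
  is_dist e' (inl a) (inl v) n.+1 -> is_dist e' (inl a) c n -> e' c (inl v) ->
  exists2 g, on_edge v g c & exists d, [/\ is_dist e a v d.+1, is_dist e a g d & e g v].
Proof.
move=> Dv Dc ecv; have [dv Dv'] : exists dv, is_dist e a v dv.
  have [q Wq _] := is_dist_walk Dv.
  by have [p Wp _] : shadow a (inl v) (size q) := shadow_walk Wq; apply: walk_is_dist Wp.
have Fv := subdiv_dist_old_old Dv' Dv; have [p Wp _] := is_dist_walk Dv'.
have dist_nbr u : e v u -> exists du, is_dist e a u du.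
  by move=> evu; apply: walk_is_dist (walk_rcons Wp evu).
case: (subdiv_nbr_old ecv) Dc => [[z -> [ezv side]] | [[y [H ->]] | [x [H ->]]]] Dc.
- have [dz Dz] : exists dz, is_dist e a z dz by apply: dist_nbr; rewrite e_sym.
  have Fz := subdiv_dist_old_old Dz Dc; have cz : cross a z = cross a v.
    by case: side => [/cross_side | k0]; last rewrite !cross0.
  exists z; rewrite /= ?eqxx //; exists dz; rewrite (_ : dz.+1 = dv) //; lia.
- have eyv : e y v by rewrite e_sym (cut_rel H).
  have [dy Dy] := dist_nbr y (cut_rel H).
  have Fc := subdiv_dist_old_new (ltn0Sn k) Dv' Dy Dc; have := is_dist_edge Dy Dv' eyv.
  move: Fv Fc; rewrite /cross (cut_in H) (negbTE (cut_out H)) => Fv Fc tri.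
  have dyv : dy.+1 = dv by move: Fv Fc; case: (a \in S) => /=; lia.
  by exists y; [apply: on_edge_subdiv_at | exists dy; rewrite dyv].
- have exv := cut_rel H; have evx : e v x by rewrite e_sym.
  have [dx Dx] := dist_nbr x evx.
  have Fc := subdiv_dist_old_new (leqnSn k) Dx Dv' Dc; have := is_dist_edge Dx Dv' exv.
  move: Fv Fc; rewrite /cross (cut_in H) (negbTE (cut_out H)) => Fv Fc tri.
  have dxv : dx.+1 = dv by move: Fv Fc; case: (a \in S) => /=; lia.
  by exists x; [apply: on_edge_subdiv_at_rev | exists dx; rewrite dxv].
Qed.

Hypothesis e_geo : geodetic e.

Lemma unique_pred_old_old a v : unique_pred e' (inl a) (inl v).
Proof.
move=> n c1 c2 Dv D1 D2 e1 e2.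
have [g1 on1 [d1 [Dv1 Dg1 eg1]]] := subdiv_pred_old Dv D1 e1.
have [g2 on2 [d2 [Dv2 Dg2 eg2]]] := subdiv_pred_old Dv D2 e2.
have [d12] : d1.+1 = d2.+1 := is_dist_uniq Dv1 Dv2.
rewrite -d12 in Dg2; have g12 := geodetic_unique_pred e_geo Dv1 Dg1 Dg2 eg1 eg2.
by rewrite -g12 in on2; apply: on_edge_uniq e1 e2 on1 on2.
Qed.

(** * Shortest paths from a new vertex *)

(* The analogue of [shadow] for walks of G' from the new vertex
   [subdiv_at H s]: they stay on the subdivided edge or leave it through [x]
   or [y]. *)
Definition shadow_new x y (H : cut_edge e S x y) (s : nat) (b : V') (n : nat) : Prop :=
  (exists2 t, t <= k.+1 & b = subdiv_at H t /\ (s - t) + (t - s) <= n) \/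
  (exists2 m, shadow x b m & s + m <= n) \/
  (exists2 m, shadow y b m & k.+1 - s + m <= n).

Lemma shadow_new_step x y (H : cut_edge e S x y) s b c n : s <= k.+1 ->
  shadow_new H s b n -> e' b c -> shadow_new H s c n.+1.
Proof.
move=> le_sk [[t le_tk [-> dst]]|[[m Sh mn]|[m Sh mn]]] ebc; last first.
- by right; right; exists m.+1; [apply: shadow_step Sh ebc | lia].
- by right; left; exists m.+1; [apply: shadow_step Sh ebc | lia].
case: t le_tk dst ebc => [|i] le_tk dst ebc.
  by right; left; exists 1; [apply: shadow_step (shadow_self x) ebc | lia].
case: (ltnP i k) => [lt_ik|le_ki].
  rewrite subdiv_rel_sym in ebc.
  case: (subdiv_at_nbr lt_ik ebc) => ->; left; first by exists i; [lia | split=> //; lia].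
  by exists i.+2; [lia | split=> //; lia].
have ik : i = k by lia.
subst i; rewrite subdiv_at_last in ebc.
by right; right; exists 1; [apply: shadow_step (shadow_self y) ebc | lia].
Qed.

Lemma shadow_new_walk x y (H : cut_edge e S x y) s b q : s <= k.+1 ->
  walk e' (subdiv_at H s) b q -> shadow_new H s b (size q).
Proof.
move=> le_sk; apply: walk_invariant => [|b' c m]; last exact: shadow_new_step.
by left; exists s => //; split=> //; rewrite subnn.
Qed.

Lemma shadow_new_off x y (H : cut_edge e S x y) s b n : shadow_new H s b n ->
  (forall t, 0 < t <= k -> b != subdiv_at H t) ->
  (exists2 m, shadow x b m & s + m <= n) \/ (exists2 m, shadow y b m & k.+1 - s + m <= n).
Proof.
case=> [[t le_tk [-> dst]] off|Sh _]; last exact: Sh.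
case: t le_tk dst off => [|i] le_tk dst off.
  by left; exists 0; [apply: shadow_self | lia].
case: (ltnP i k) => [lt_ik|le_ki].
  by have := off i.+1; rewrite eqxx lt_ik => /(_ isT).
have ik : i = k by lia.
by subst i; rewrite subdiv_at_last; right; exists 0; [apply: shadow_self | lia].
Qed.

Lemma subdiv_dist_new_same x y (H : cut_edge e S x y) s t n : 0 < s <= k -> t <= k.+1 ->
  is_dist e' (subdiv_at H s) (subdiv_at H t) n -> n = (s - t) + (t - s).
Proof.
move=> /andP[s_gt0 le_sk] le_tk Dn; have le_sk1 : s <= k.+1 by lia.
have [q Wq Sq] := subdiv_at_walk H le_sk1 le_tk; have := is_dist_min Dn Wq.
have [q' Wq' Sq'] := is_dist_walk Dn; have [cxy cyx] : cross x y = k /\ cross y x = k.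
  by rewrite /cross (negbTE (cut_side H)) eq_sym (negbTE (cut_side H)).
case: (shadow_new_walk le_sk1 Wq') => [[t' le_t'k [/subdiv_at_inj E dst]]|[[m Sh mn]|[m Sh mn]]].
- by rewrite -(E le_tk le_t'k) in dst; lia.
- by case: (shadow_subdiv_at le_tk Sh) => -[p _]; rewrite ?crossxx ?cxy; lia.
- by case: (shadow_subdiv_at le_tk Sh) => -[p _]; rewrite ?crossxx ?cyx; lia.
Qed.

Lemma cut_dist_same_side x y w z (H : cut_edge e S x y) (H' : cut_edge e S w z)
    dxw dxz dyw dyz :
  is_dist e x w dxw -> is_dist e x z dxz -> is_dist e y w dyw -> is_dist e y z dyz ->
  dxw <= dyw /\ dyz <= dxz.
Proof.
move=> Dxw Dxz Dyw Dyz; have eyx : e y x by rewrite e_sym (cut_rel H).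
have wx : (w \in S) == (x \in S) by rewrite (cut_in H) (cut_in H').
have zy : (z \in S) == (y \in S) by rewrite (negbTE (cut_out H)) (negbTE (cut_out H')).
have yx : (y \in S) != (x \in S) by rewrite eq_sym cut_side.
have Dsym := is_dist_sym e_sym.
split; first exact: is_dist_same_side_le eyx yx wx (Dsym _ _ _ Dyw) (Dsym _ _ _ Dxw).
exact: is_dist_same_side_le (cut_rel H) (cut_side H) zy (Dsym _ _ _ Dxz) (Dsym _ _ _ Dyz).
Qed.

Lemma subdiv_dist_new_other x y w z (H : cut_edge e S x y) (H' : cut_edge e S w z) s t
    dxw dxz dyw dyz n : (x, y) != (w, z) -> 0 < s <= k -> t <= k.+1 ->
  is_dist e x w dxw -> is_dist e x z dxz -> is_dist e y w dyw -> is_dist e y z dyz ->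
  is_dist e' (subdiv_at H s) (subdiv_at H' t) n ->
  n = minn (s + dxw + t) (k.+1 - s + dyz + (k.+1 - t)).
Proof.
move=> nxy s_in le_tk Dxw Dxz Dyw Dyz Dn; have le_sk : s <= k.+1 by lia.
have [cxw cxz cyw cyz] : [/\ cross x w = 0, cross x z = k, cross y w = k & cross y z = 0].
  by rewrite /cross (cut_in H) (cut_in H') (negbTE (cut_out H)) (negbTE (cut_out H')).
have [dxw_dyw dyz_dxz] := cut_dist_same_side H H' Dxw Dxz Dyw Dyz.
have up u su tu v d : su <= k.+1 -> tu <= k.+1 -> subdiv_at H su = inl u ->
    subdiv_at H' tu = inl v -> is_dist e u v d ->
    n <= (su - s) + (s - su) + d + cross u v + ((t - tu) + (tu - t)).
  move=> le_su le_tu Hu Hv Dv; have [q1 W1 S1] := subdiv_at_walk H le_sk le_su.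
  have [q2 W2 S2] := subdiv_walk_via le_tu le_tk Hv Dv; rewrite Hu in W1.
  by have := is_dist_min Dn (walk_cat W1 W2); rewrite size_cat S1 S2; lia.
have := up x 0 0 w dxw (leq0n k.+1) (leq0n k.+1) erefl erefl Dxw.
have := up y k.+1 k.+1 z dyz (leqnn k.+1) (leqnn k.+1) (subdiv_at_last H) (subdiv_at_last H') Dyz.
rewrite cxw cyz => up_yz up_xw.
have [q Wq Sq] := is_dist_walk Dn.
have off t0 : 0 < t0 <= k -> subdiv_at H' t != subdiv_at H t0 by apply: subdiv_at_other.
case: (shadow_new_off (shadow_new_walk le_sk Wq) off) => -[m Sh mn];
  case: (shadow_subdiv_at le_tk Sh) => -[p Wp Sp];
  [ have := is_dist_min Dxw Wp | have := is_dist_min Dxz Wp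
  | have := is_dist_min Dyw Wp | have := is_dist_min Dyz Wp ];
  rewrite ?cxw ?cxz ?cyw ?cyz in Sp; lia.
Qed.

Lemma is_dist_new_other_ends x y w z (H : cut_edge e S x y) (H' : cut_edge e S w z) s t n :
  (x, y) != (w, z) -> s <= k.+1 -> t <= k.+1 ->
  is_dist e' (subdiv_at H s) (subdiv_at H' t) n ->
  exists dxw dxz dyw dyz,
    [/\ is_dist e x w dxw, is_dist e x z dxz, is_dist e y w dyw & is_dist e y z dyz].
Proof.
move=> nxy le_sk le_tk /is_dist_walk[q Wq _].
have off t0 : 0 < t0 <= k -> subdiv_at H' t != subdiv_at H t0 by apply: subdiv_at_other.
have ends := edges_is_dist e_sym (cut_rel H) (cut_rel H').
have x_xy := mem_head x [:: y]; have y_xy := mem_last x [:: y].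
have w_wz := mem_head w [:: z]; have z_wz := mem_last w [:: z].
case: (shadow_new_off (shadow_new_walk le_sk Wq) off) => -[m Sh _];
  case: (shadow_subdiv_at le_tk Sh) => -[p Wp _].
- exact: ends _ _ _ x_xy w_wz Wp.
- exact: ends _ _ _ x_xy z_wz Wp.
- exact: ends _ _ _ y_xy w_wz Wp.
- exact: ends _ _ _ y_xy z_wz Wp.
Qed.

Lemma no_tie_new_same x y (H : cut_edge e S x y) i j n : i < k -> j < k ->
  is_dist e' (subdiv_at H i.+1) (subdiv_at H j.+1) n.+1 ->
  is_dist e' (subdiv_at H i.+1) (subdiv_at H j) n ->
  is_dist e' (subdiv_at H i.+1) (subdiv_at H j.+2) n -> False.
Proof.
move=> lt_ik lt_jk D1 D0 D2; have s_in : 0 < i.+1 <= k by [].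
have [le0 le1 le2] : [/\ j <= k.+1, j.+1 <= k.+1 & j.+2 <= k.+1] by split; lia.
have := subdiv_dist_new_same s_in le0 D0; have := subdiv_dist_new_same s_in le1 D1.
by have := subdiv_dist_new_same s_in le2 D2; lia.
Qed.

Hypothesis cut_odd : forall u v w x : V, cut_edge e S u v -> cut_edge e S w x ->
  (u, v) != (w, x) -> forall n m, is_dist e u w n -> is_dist e v x m -> odd (n + m).

Lemma no_tie_new_other x y w z (H : cut_edge e S x y) (H' : cut_edge e S w z) i j n :
  (x, y) != (w, z) -> i < k -> j < k ->
  is_dist e' (subdiv_at H i.+1) (subdiv_at H' j.+1) n.+1 ->
  is_dist e' (subdiv_at H i.+1) (subdiv_at H' j) n ->
  is_dist e' (subdiv_at H i.+1) (subdiv_at H' j.+2) n -> False.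
Proof.
move=> nxy lt_ik lt_jk D1 D0 D2; have s_in : 0 < i.+1 <= k by [].
have [le0 le1 le2] : [/\ j <= k.+1, j.+1 <= k.+1 & j.+2 <= k.+1] by split; lia.
have le_ik : i.+1 <= k.+1 by lia.
have [dxw [dxz [dyw [dyz [Dxw Dxz Dyw Dyz]]]]] := is_dist_new_other_ends nxy le_ik le1 D1.
have := subdiv_dist_new_other nxy s_in le0 Dxw Dxz Dyw Dyz D0.
have := subdiv_dist_new_other nxy s_in le1 Dxw Dxz Dyw Dyz D1.
have := subdiv_dist_new_other nxy s_in le2 Dxw Dxz Dyw Dyz D2.
have odd_sum : (dxw + dyz) %% 2 = 1 by rewrite modn2 (cut_odd H H' nxy Dxw Dyz).
lia.
Qed.

Lemma unique_pred_new_new t1 t2 : unique_pred e' (inr t1) (inr t2).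
Proof.
case: t1 t2 => [[[x y] i] H] [[[w z] j] H']; rewrite !subdiv_at_ord.
apply: unique_pred_of_two_nbrs (subdiv_at_nbr (ltn_ord j)) _ => n.
case: (eqVneq (x, y) (w, z)) => [[<- <-] | nxy] in H' *; last exact: no_tie_new_other.
by rewrite !(subdiv_at_irr H' H); apply: no_tie_new_same.
Qed.

Lemma subdiv_geodetic : geodetic e'.
Proof.
apply: geodetic_of_unique_pred subdiv_rel_sym _ => -[a|t1] [b|t2].
- by left; apply: unique_pred_old_old.
- by left; apply: unique_pred_old_new.
- by right; apply: unique_pred_old_new.
- by left; apply: unique_pred_new_new.
Qed.

End Subdivision.

Theorem proposition1 (V : finType) (e : rel V)
  (e_sym : symmetric e) (e_irr : irreflexive e)
  (S : {set V})
  (Hgeo : geodetic e)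
  (HS : geod_closed e S) (HT : geod_closed e (~: S))
  (Hodd : forall u v w x : V, cut_edge e S u v -> cut_edge e S w x ->
          (u, v) != (w, x) ->
          forall n m, is_dist e u w n -> is_dist e v x m -> odd (n + m))
  (k : nat) :
  geodetic (subdiv_rel e S k).
Proof.
(* Loops lie on no shortest path. *)
exact: subdiv_geodetic e_sym HS HT Hgeo Hodd.
Qed.
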